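(* Let $G$ be a finite digraph without sources that has a good quasi-kernel. Then $G$ has a quasi-kernel with at most $|V(G)|/2$ vertices.
   Context: Digraphs are finite, without loops and without multiple edges in the same direction; anti-parallel edges are allowed. For $V'\subseteq V(G)$, $\Gamma^+(V')$ is the set of out-neighbours of vertices of $V'$, $\Gamma^+_2(V')=V'\cup\Gamma^+(V')\cup\Gamma^+(\Gamma^+(V'))$. A source is a vertex of in-degree $0$. A quasi-kernel is an independent set $Q$ with $\Gamma^+_2(Q)=V(G)$. A quasi-kernel $Q$ is good if $Q\subseteq\Gamma^+(\Gamma^+(Q))$. *)

From mathcomp Require Import all_boot.
Set Implicit Arguments. Unset Strict Implicit. Unset Printing Implicit Defensive.

(* A finite digraph: vertex set a finType T, arc relation e : rel T
   (e x y means there is an arc x -> y). Being a relation, there are no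
   multiple arcs in the same direction; anti-parallel arcs are allowed.
   Loops are excluded by the hypothesis [irreflexive e]. *)

Definition outN (T : finType) (e : rel T) (A : {set T}) : {set T} :=
  [set y | [exists x in A, e x y]].

Definition outN2 (T : finType) (e : rel T) (A : {set T}) : {set T} :=
  A :|: outN e A :|: outN e (outN e A).

Definition is_source (T : finType) (e : rel T) (v : T) : bool :=
  [forall u, ~~ e u v].

Definition independent (T : finType) (e : rel T) (Q : {set T}) : bool :=
  [forall x in Q, forall y in Q, ~~ e x y].

Definition quasi_kernel (T : finType) (e : rel T) (Q : {set T}) : bool :=
  independent e Q && (outN2 e Q == [set: T]).

Definition good_quasi_kernel (T : finType) (e : rel T) (Q : {set T}) : bool :=
  quasi_kernel e Q && (Q \subset outN e (outN e Q)).

From mathcomp Require Import all_boot zify.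
Set Implicit Arguments. Unset Strict Implicit. Unset Printing Implicit Defensive.

(* Let Q be a good quasi-kernel and S := Γ+(Q).
   - Q is independent, so Q and S are disjoint and |Q| + |S| <= |V|.
   - Choosing one in-neighbour in Q for every vertex of S yields B ⊆ Q
     with |B| <= |S| and S ⊆ Γ+(B).
   - B is again a quasi-kernel: it is independent as a subset of Q, it
     dominates S in one step, Γ+(S) in two steps, and, because Q is good,
     Q ⊆ Γ+(S) is also reached in two steps. *)

Section QuasiKernels.

Variables (T : finType) (e : rel T).

Lemma outN_mono (A A' : {set T}) :
  A \subset A' -> outN e A \subset outN e A'.
Proof.
move=> sAA'; apply/subsetP=> y; rewrite !inE => /existsP [x /andP [xA exy]].
by apply/existsP; exists x; rewrite (subsetP sAA') // exy.
Qed.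

Lemma independent_sub (A A' : {set T}) :
  A \subset A' -> independent e A' -> independent e A.
Proof.
move=> sAA' /forallP indA'; apply/forallP=> x; apply/implyP=> xA.
apply/forallP=> y; apply/implyP=> yA.
have /forallP/(_ y) := implyP (indA' x) (subsetP sAA' x xA).
by rewrite (subsetP sAA' y yA).
Qed.

(* An independent set is disjoint from its out-neighbourhood, so together
   they contain at most |V| vertices. *)
Lemma independent_card_outN (A : {set T}) :
  independent e A -> #|A| + #|outN e A| <= #|T|.
Proof.
move=> /forallP indA.
have disjA : A :&: outN e A = set0.
  apply/setP=> y; rewrite !inE; apply/negbTE/negP=> /andP [yA].
  case/existsP=> x /andP [xA exy].
  have /forallP/(_ y) := implyP (indA x) xA.
  by rewrite yA exy.
by rewrite -cardsUI disjA cards0 addn0 max_card.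
Qed.

(* Picking one in-neighbour in A for each out-neighbour of A gives a
   subset B of A, no larger than Γ+(A), with the same out-neighbourhood. *)
Lemma outN_small_base (A : {set T}) :
  exists2 B : {set T}, B \subset A &
    #|B| <= #|outN e A| /\ outN e A \subset outN e B.
Proof.
pose pred_in (s : T) := odflt s [pick x in A | e x s].
have pred_inP s : s \in outN e A -> pred_in s \in A /\ e (pred_in s) s.
  rewrite inE => /existsP [x /andP [xA exs]].
  rewrite /pred_in; case: pickP => [y /andP [yA eys] | /(_ x)] //=.
  by rewrite xA exs.
exists (pred_in @: outN e A).
  by apply/subsetP=> y /imsetP [s sS ->]; case: (pred_inP s sS).
split; first exact: leq_imset_card.
apply/subsetP=> s sS; rewrite inE; apply/existsP; exists (pred_in s).
by case: (pred_inP s sS) => _ ->; rewrite andbT imset_f.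
Qed.

Lemma good_quasi_kernel_shrink (Q B : {set T}) :
  good_quasi_kernel e Q -> B \subset Q -> outN e Q \subset outN e B ->
  quasi_kernel e B.
Proof.
case/andP=> /andP [indQ /eqP covQ] goodQ sBQ sNQB.
have sNNQB := outN_mono sNQB.
rewrite /quasi_kernel (independent_sub sBQ indQ) /=.
apply/eqP/setP=> v; rewrite in_setT.
have : v \in outN2 e Q by rewrite covQ inE.
rewrite /outN2 !in_setU => /orP [/orP [vQ | vNQ] | vNNQ].
- by rewrite (subsetP sNNQB) ?orbT // (subsetP goodQ).
- by rewrite (subsetP sNQB) ?orbT.
- by rewrite (subsetP sNNQB) ?orbT.
Qed.

End QuasiKernels.

(* A digraph with a good quasi-kernel has a quasi-kernel on at most half
   of its vertices.  (The hypotheses that G is loopless and source-free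
   are part of the setting but not needed for this bound.) *)
Theorem mainTheorem3 (T : finType) (e : rel T) :
  irreflexive e ->
  (forall v : T, ~~ is_source e v) ->
  (exists Q : {set T}, good_quasi_kernel e Q) ->
  exists Q : {set T}, quasi_kernel e Q /\ 2 * #|Q| <= #|T|.
Proof.
move=> _ _ [Q goodQ].
have qkQ : quasi_kernel e Q by case/andP: goodQ.
have cardQ : #|Q| + #|outN e Q| <= #|T|.
  by apply: independent_card_outN; case/andP: qkQ.
have [B sBQ [cardB sNQB]] := outN_small_base e Q.
have qkB := good_quasi_kernel_shrink goodQ sBQ sNQB.
case: (leqP (2 * #|Q|) #|T|) => halfQ; first by exists Q.
by exists B; split=> //; lia.
Qed.
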